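(* Let $S=\{s_1,\dots,s_{k_1}\}$ and $T=\{t_1,\dots,t_{k_2}\}$ be nonempty sets of positive integers and $d=\gcd\{s+t: s\in S,t\in T\}$. Then there exist integers $a_1,\dots,a_{k_1},b_1,\dots,b_{k_2}$ such that $$d=\sum_{i=1}^{k_1}a_is_i-\sum_{i=1}^{k_2}b_it_i\quad\text{and}\quad\sum_{i=1}^{k_1}a_i+\sum_{i=1}^{k_2}b_i=0.$$ *)

From mathcomp Require Import all_boot all_order all_algebra.
Set Implicit Arguments. Unset Strict Implicit. Unset Printing Implicit Defensive.
Import Order.TTheory GRing.Theory Num.Theory.

Definition gcd_sums (k1 k2 : nat) (s : 'I_k1 -> nat) (t : 'I_k2 -> nat) : nat :=
  \big[gcdn/0]_(i < k1) \big[gcdn/0]_(j < k2) (s i + t j).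

(* The integers of the form sum_i a_i s_i - sum_j b_j t_j with sum_i a_i + sum_j b_j = 0
   form an ideal of Z.  It contains every s_i + t_j (take a = e_i and b = -e_j), hence,
   by Bezout, the gcd of all of them. *)

From mathcomp Require Import all_boot all_order all_algebra.
Import Order.TTheory GRing.Theory Num.Theory.
Local Open Scope ring_scope.

Lemma sum_eq_mulr (R : pzSemiRingType) n (i : 'I_n) (f : 'I_n -> R) :
  \sum_(j < n) (j == i)%:R * f j = f i.
Proof.
by rewrite (bigD1 i) //= eqxx mul1r big1 ?addr0 // => j /negbTE->; rewrite mul0r.
Qed.

Lemma sum_eq_natr (R : pzSemiRingType) n (i : 'I_n) :
  \sum_(j < n) (j == i)%:R = 1 :> R.
Proof. by under eq_bigr do rewrite -[_%:R]mulr1; rewrite sum_eq_mulr. Qed.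

Section BalancedCombination.

Variables (R : pzRingType) (k1 k2 : nat) (s : 'I_k1 -> R) (t : 'I_k2 -> R).

Definition balanced_comb (x : R) :=
  exists (a : 'I_k1 -> R) (b : 'I_k2 -> R),
    x = \sum_(i < k1) a i * s i - \sum_(j < k2) b j * t j
    /\ \sum_(i < k1) a i + \sum_(j < k2) b j = 0.

Lemma balanced_comb0 : balanced_comb 0.
Proof.
exists (fun=> 0), (fun=> 0).
by rewrite !big1 ?subr0 ?addr0 // => i _; rewrite mul0r.
Qed.

Lemma balanced_combD x y :
  balanced_comb x -> balanced_comb y -> balanced_comb (x + y).
Proof.
move=> [a1 [b1 [-> sum1]]] [a2 [b2 [-> sum2]]].
exists (fun i => a1 i + a2 i), (fun j => b1 j + b2 j); split.
  rewrite addrACA -opprD -!big_split /=.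
  by congr (_ - _); apply: eq_bigr => *; rewrite mulrDl.
by rewrite !big_split /= addrACA sum1 sum2 addr0.
Qed.

Lemma balanced_combMl u x : balanced_comb x -> balanced_comb (u * x).
Proof.
move=> [a [b [-> sum0]]]; exists (fun i => u * a i), (fun j => u * b j); split.
  by rewrite mulrBr !mulr_sumr; congr (_ - _); apply: eq_bigr => *; rewrite mulrA.
by rewrite -!mulr_sumr -mulrDr sum0 mulr0.
Qed.

Lemma balanced_comb_addr i j : balanced_comb (s i + t j).
Proof.
exists (fun i' => (i' == i)%:R), (fun j' => - (j' == j)%:R).
under [X in _ - X]eq_bigr do rewrite mulNr.
by rewrite sumrN !sum_eq_mulr opprK sumrN !sum_eq_natr subrr.
Qed.

End BalancedCombination.

Arguments balanced_comb {R k1 k2} s t x.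

Section IntegerBalancedCombination.

Variables (k1 k2 : nat) (s : 'I_k1 -> int) (t : 'I_k2 -> int).

Lemma balanced_comb_gcdn (m n : nat) :
  balanced_comb s t m -> balanced_comb s t n -> balanced_comb s t (gcdn m n).
Proof.
move=> comb_m comb_n; change (balanced_comb s t (gcdz m n)).
have [u [v <-]] := Bezoutz m n.
by apply: balanced_combD; apply: balanced_combMl.
Qed.

Lemma balanced_comb_big_gcdn (I : Type) (r : seq I) (P : pred I) (F : I -> nat) :
  (forall i, P i -> balanced_comb s t (F i)) ->
  balanced_comb s t (\big[gcdn/0%N]_(i <- r | P i) F i).
Proof.
by apply: (big_ind (fun n : nat => balanced_comb s t n));
  [exact: balanced_comb0 | exact: balanced_comb_gcdn].
Qed.

End IntegerBalancedCombination.

Theorem lemma4p1 (k1 k2 : nat) (s : 'I_k1 -> nat) (t : 'I_k2 -> nat) :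
  (0 < k1)%N -> (0 < k2)%N ->
  injective s -> injective t ->
  (forall i, (0 < s i)%N) -> (forall j, (0 < t j)%N) ->
  exists (a : 'I_k1 -> int) (b : 'I_k2 -> int),
    (gcd_sums s t)%:Z = \sum_(i < k1) a i * (s i)%:Z - \sum_(j < k2) b j * (t j)%:Z
    /\ \sum_(i < k1) a i + \sum_(j < k2) b j = 0.
Proof.
move=> _ _ _ _ _ _.
apply: (@balanced_comb_big_gcdn _ _ (fun i => (s i)%:Z) (fun j => (t j)%:Z)) => i _.
apply: balanced_comb_big_gcdn => j _.
exact: balanced_comb_addr.
Qed.
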